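(* Let $\alpha,\beta$ be relatively prime positive integers. For all positive integers $n$ with $s(n)>2$, $$\tfrac12\log_\gamma(n)-1\le s(n)\le\log_\gamma(n)+2.$$ Moreover, for $\alpha=\beta=1$ and all $n$ with $s^{1,1}(n)>2$, we have $s^{1,1}(n)\ge\frac12\log_\varphi(n)+2$, where $\varphi=\frac{1+\sqrt5}{2}$ is the golden ratio.
   Context: For relatively prime positive integers $\alpha,\beta$ and positive integers $a_1,a_2$, the $(\alpha,\beta)$-walk $w_k(a_1,a_2)$ is given by $w_1=a_1$, $w_2=a_2$, $w_{k+2}=\alpha w_{k+1}+\beta w_k$ ($k\ge1$). For a positive integer $n$, $s(n;a_1,a_2)$ is the (largest) index $s$ with $w_s(a_1,a_2)=n$ ($-\infty$ if none), and $s(n)=s^{\alpha,\beta}(n)=\max_{a_1,a_2\ge1}s(n;a_1,a_2)$. $\gamma=\frac12(\alpha+\sqrt{\alpha^2+4\beta})$. *)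

From Stdlib Require Import Reals Arith.
Open Scope R_scope.

(* walk_pair a b k = (w_{k+1}, w_{k+2}) for the (alpha,beta)-walk with
   w_1 = a, w_2 = b, w_{k+2} = alpha w_{k+1} + beta w_k. *)
Fixpoint walk_pair (alpha beta a1 a2 : nat) (k : nat) : nat * nat :=
  match k with
  | O => (a1, a2)
  | S k' => let (x, y) := walk_pair alpha beta a1 a2 k' in
            (y, (alpha * y + beta * x)%nat)
  end.

(* walk alpha beta a1 a2 k = w_k(a1,a2), for indices k >= 1 (1-based). *)
Definition walk (alpha beta a1 a2 k : nat) : nat :=
  fst (walk_pair alpha beta a1 a2 (k - 1)).

Definition is_s (alpha beta n s : nat) : Prop :=
  (1 <= s)%nat /\
  (exists a1 a2, (1 <= a1)%nat /\ (1 <= a2)%nat /\ walk alpha beta a1 a2 s = n) /\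
  (forall a1 a2 k, (1 <= a1)%nat -> (1 <= a2)%nat -> (1 <= k)%nat ->
     walk alpha beta a1 a2 k = n -> (k <= s)%nat).

Definition gamma (alpha beta : nat) : R :=
  (INR alpha + sqrt (INR alpha ^ 2 + 4 * INR beta)) / 2.

Definition logb (b x : R) : R := ln x / ln b.

Definition phi : R := (1 + sqrt 5) / 2.

(* Let U be the Lucas sequence U_0 = 0, U_1 = 1, U_(k+2) = alpha U_(k+1) + beta U_k.
   By linearity w_(k+2)(a1, a2) = beta U_k a1 + U_(k+1) a2, and since gamma and
   alpha - gamma are the roots of x^2 = alpha x + beta, U_(k+1) = gamma^k + (alpha - gamma) U_k.
   Hence U_(k+1) <= gamma^k <= beta U_k + U_(k+1), so n = w_s >= gamma^(s-2): the upper bound.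
   For the lower bound, beta U_(s-1) and U_s are coprime, so if n > beta U_(s-1) U_s the
   Frobenius coin argument gives n = x beta U_(s-1) + y U_s = w_(s+1)(x, y) with x, y >= 1,
   contradicting the maximality of s.  Thus n <= beta U_(s-1) U_s <= gamma^(2s-1), and for
   alpha = beta = 1 the same identity sharpens this to F_(s-1) F_s <= phi^(2s-4). *)
From Stdlib Require Import Reals Arith ZArith Lia Lra Psatz.
Open Scope R_scope.

Section Bezout.

Local Open Scope Z_scope.

Lemma bezout_sym a b : Z.Bezout a b 1 -> Z.Bezout b a 1.
Proof. intros [u [v E]]. exists v, u. lia. Qed.

Lemma bezout_mul_r a b c : Z.Bezout a b 1 -> Z.Bezout a c 1 -> Z.Bezout a (b * c) 1.
Proof.
  intros [u1 [v1 E1]] [u2 [v2 E2]].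
  exists (u1 * u2 * a + u1 * v2 * c + v1 * b * u2), (v1 * v2).
  transitivity ((u1 * a + v1 * b) * (u2 * a + v2 * c)); [ring | rewrite E1, E2; ring].
Qed.

Lemma bezout_add_mul_r a b c : Z.Bezout a b 1 -> Z.Bezout a (b + c * a) 1.
Proof. intros [u [v E]]. exists (u - v * c), v. rewrite <- E. ring. Qed.

Lemma bezout_of_gcd_1 a b : Nat.gcd a b = 1%nat -> Z.Bezout (Z.of_nat a) (Z.of_nat b) 1.
Proof.
  intro H. destruct (Nat.gcd_bezout a b) as [[u [v E]] | [u [v E]]]; rewrite H in E.
  - exists (Z.of_nat u), (- Z.of_nat v). lia.
  - exists (- Z.of_nat v), (Z.of_nat u). lia.
Qed.

Lemma frobenius_pos_repr a b n : (0 < a) -> (0 < b) -> Z.Bezout a b 1 -> (a * b < n) ->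
  exists x y, (1 <= x) /\ (1 <= y) /\ (x * a + y * b = n).
Proof.
  intros Ha Hb [u [v Huv]] Hn.
  pose proof (Z.div_mod (n * u - 1) b ltac:(lia)) as Hdiv.
  pose proof (Z.mod_pos_bound (n * u - 1) b Hb) as Hmod.
  set (t := ((n * u - 1) / b)) in *.
  (* x is the representative of n u modulo b in [1, b], so x a = n (mod b). *)
  set (x := ((n * u - 1) mod b + 1)).
  assert (Hsum : (x * a + (n * v + a * t) * b = n)).
  { replace x with (n * u - b * t) by (unfold x; lia).
    transitivity (n * (u * a + v * b)); [ring | rewrite Huv; ring]. }
  assert (Hxa : (x * a <= b * a)) by (apply Z.mul_le_mono_nonneg_r; unfold x; lia).
  exists x, (n * v + a * t). split; [unfold x; lia|]. split; [nia | exact Hsum].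
Qed.

End Bezout.

Fixpoint lucasU (al be k : nat) : nat :=
  match k with
  | O => 0
  | S k' => match k' with
            | O => 1
            | S k'' => al * lucasU al be k' + be * lucasU al be k''
            end
  end.

Lemma lucasU_SS al be k :
  lucasU al be (S (S k)) = (al * lucasU al be (S k) + be * lucasU al be k)%nat.
Proof. reflexivity. Qed.

Lemma lucasU_pos al be k : (1 <= al)%nat -> (1 <= k)%nat -> (1 <= lucasU al be k)%nat.
Proof.
  intros Hal Hk.
  assert (H : forall j, (1 <= lucasU al be (S j))%nat /\ (1 <= lucasU al be (S (S j)))%nat).
  { induction j as [|j [IH1 IH2]]; [simpl; lia|].
    split; [exact IH2 | rewrite lucasU_SS; nia]. }
  destruct k as [|k]; [lia | apply H].
Qed.

Lemma lucasU_bezout al be : Z.Bezout (Z.of_nat al) (Z.of_nat be) 1 -> forall k,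
  Z.Bezout (Z.of_nat (be * lucasU al be k)) (Z.of_nat (lucasU al be (S k))) 1.
Proof.
  intro Hab.
  assert (H : forall k, Z.Bezout (Z.of_nat (lucasU al be k)) (Z.of_nat (lucasU al be (S k))) 1
                     /\ Z.Bezout (Z.of_nat be) (Z.of_nat (lucasU al be (S k))) 1).
  { induction k as [|k [IH1 IH2]].
    - split; [exists 0%Z, 1%Z | exists 0%Z, 1%Z]; reflexivity.
    - set (x := Z.of_nat (lucasU al be k)) in *. set (y := Z.of_nat (lucasU al be (S k))) in *.
      assert (E : Z.of_nat (lucasU al be (S (S k))) = (Z.of_nat al * y + x * Z.of_nat be)%Z)
        by (rewrite lucasU_SS; unfold x, y; lia).
      rewrite E. split.
      + rewrite Z.add_comm. apply bezout_add_mul_r, bezout_mul_r; apply bezout_sym; assumption.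
      + apply bezout_add_mul_r, bezout_mul_r; [apply bezout_sym, Hab | exact IH2]. }
  intro k. rewrite Nat2Z.inj_mul.
  apply bezout_sym, bezout_mul_r; apply bezout_sym, H.
Qed.

Lemma walk_pair_S al be a1 a2 k :
  walk_pair al be a1 a2 (S k) =
  (snd (walk_pair al be a1 a2 k),
   al * snd (walk_pair al be a1 a2 k) + be * fst (walk_pair al be a1 a2 k))%nat.
Proof. simpl. destruct (walk_pair al be a1 a2 k). reflexivity. Qed.

Lemma walk_pair_lucasU al be a1 a2 k :
  walk_pair al be a1 a2 (S k) =
  (be * lucasU al be k * a1 + lucasU al be (S k) * a2,
   be * lucasU al be (S k) * a1 + lucasU al be (S (S k)) * a2)%nat.
Proof.
  induction k as [|k IH].
  - simpl. f_equal; lia.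
  - rewrite walk_pair_S, IH. cbn [fst snd]. rewrite !lucasU_SS. f_equal. ring.
Qed.

Lemma walk_SS al be a1 a2 k :
  walk al be a1 a2 (S (S k)) = (be * lucasU al be k * a1 + lucasU al be (S k) * a2)%nat.
Proof. unfold walk. rewrite Nat.sub_succ, Nat.sub_0_r, walk_pair_lucasU. reflexivity. Qed.

Lemma is_s_ge_of_lucas_product_lt al be n s k :
  (1 <= al)%nat -> (1 <= be)%nat -> Nat.gcd al be = 1%nat -> (1 <= k)%nat ->
  is_s al be n s -> (be * lucasU al be k * lucasU al be (S k) < n)%nat -> (S (S k) <= s)%nat.
Proof.
  intros Hal Hbe Hg Hk [_ [_ Hmax]] Hn.
  pose proof (lucasU_pos al be k Hal Hk). pose proof (lucasU_pos al be (S k) Hal ltac:(lia)).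
  destruct (frobenius_pos_repr (Z.of_nat (be * lucasU al be k))
                                (Z.of_nat (lucasU al be (S k))) (Z.of_nat n))
    as (x & y & Hx & Hy & Hxy); [nia | lia | apply lucasU_bezout, bezout_of_gcd_1, Hg | nia |].
  apply (Hmax (Z.to_nat x) (Z.to_nat y)); try lia.
  rewrite walk_SS. nia.
Qed.

Lemma is_s_le_lucas_product al be n k :
  (1 <= al)%nat -> (1 <= be)%nat -> Nat.gcd al be = 1%nat -> is_s al be n (S (S k)) ->
  (n <= be * lucasU al be (S k) * lucasU al be (S (S k)))%nat.
Proof.
  intros Hal Hbe Hg Hs. apply Nat.nlt_ge. intro Hn.
  pose proof (is_s_ge_of_lucas_product_lt al be n _ (S k) Hal Hbe Hg ltac:(lia) Hs Hn). lia.
Qed.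

Section GammaBounds.

Variables al be : nat.

Local Notation g := (gamma al be).
Local Notation U := (lucasU al be).

Lemma gamma_sq : g * g = INR al * g + INR be.
Proof.
  pose proof (pos_INR al). pose proof (pos_INR be).
  pose proof (sqrt_sqrt (INR al ^ 2 + 4 * INR be) ltac:(nra)).
  unfold gamma. nra.
Qed.

Lemma al_le_gamma : INR al <= g.
Proof.
  pose proof (pos_INR al). pose proof (pos_INR be).
  pose proof (sqrt_sqrt (INR al ^ 2 + 4 * INR be) ltac:(nra)).
  pose proof (sqrt_pos (INR al ^ 2 + 4 * INR be)).
  unfold gamma. nra.
Qed.

Lemma one_lt_gamma : (1 <= al)%nat -> (1 <= be)%nat -> 1 < g.
Proof.
  intros Hal Hbe. apply le_INR in Hal, Hbe.
  pose proof gamma_sq. pose proof al_le_gamma. simpl INR in Hal, Hbe. nra.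
Qed.

Lemma lucasU_succ_eq k : INR (U (S k)) = g ^ k + (INR al - g) * INR (U k).
Proof.
  pose proof gamma_sq.
  induction k as [|k IH]; [simpl; ring|].
  rewrite lucasU_SS, plus_INR, !mult_INR, IH. simpl pow. nra.
Qed.

Lemma lucasU_succ_le k : INR (U (S k)) <= g ^ k.
Proof.
  rewrite lucasU_succ_eq. pose proof al_le_gamma. pose proof (pos_INR (U k)). nra.
Qed.

Lemma pow_gamma_le_lucasU k : (1 <= al)%nat -> g ^ k <= INR (be * U k + U (S k)).
Proof.
  intro Hal. apply le_INR in Hal. simpl INR in Hal.
  rewrite plus_INR, mult_INR, lucasU_succ_eq.
  pose proof gamma_sq. pose proof al_le_gamma. pose proof (pos_INR (U k)).
  assert (g - INR al <= INR be) by nra.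
  nra.
Qed.

Lemma be_lucasU_mul_le k :
  INR (be * U (S k) * U (S (S k))) <= g ^ (2 * k + 3).
Proof.
  pose proof gamma_sq. pose proof al_le_gamma. pose proof (pos_INR al).
  assert (Hbe : INR be <= g ^ 2) by (simpl; nra).
  assert (0 <= g ^ k) by (apply pow_le; lra).
  replace (g ^ (2 * k + 3)) with (g ^ 2 * g ^ k * g ^ S k)
    by (rewrite <- !pow_add; f_equal; lia).
  rewrite !mult_INR.
  pose proof (pos_INR be). pose proof (pos_INR (U (S k))).
  apply Rmult_le_compat; [nra | apply pos_INR | | apply lucasU_succ_le].
  apply Rmult_le_compat; [assumption | assumption | exact Hbe | apply lucasU_succ_le].
Qed.

Lemma lucasU_mul_le k :
  g <= 2 * INR al -> INR (U (S k) * U (S (S k))) <= INR al * g ^ (2 * k).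
Proof.
  intro Hg. rewrite mult_INR, (lucasU_succ_eq (S k)).
  pose proof (lucasU_succ_le k). pose proof (pos_INR (U (S k))). pose proof (pos_INR al).
  replace (2 * k)%nat with (k + k)%nat by lia. rewrite pow_add. simpl pow.
  set (a := INR (U (S k))) in *. set (w := g ^ k) in *.
  assert (E : INR al * (w * w) - a * (g * w + (INR al - g) * a)
              = (w - a) * (INR al * w + (INR al - g) * a)) by ring.
  assert (0 <= (w - a) * (INR al * w + (INR al - g) * a)) by (apply Rmult_le_pos; nra).
  lra.
Qed.

End GammaBounds.

Lemma ln_le x y : 0 < x -> x <= y -> ln x <= ln y.
Proof.
  intros Hx [Hxy | <-]; [left; apply ln_increasing | right]; auto.
Qed.

Lemma logb_le b x y : 1 < b -> 0 < x -> x <= y -> logb b x <= logb b y.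
Proof.
  intros Hb Hx Hxy. unfold logb, Rdiv. apply Rmult_le_compat_r.
  - left. apply Rinv_0_lt_compat. rewrite <- ln_1. apply ln_increasing; lra.
  - apply ln_le; assumption.
Qed.

Lemma logb_pow b m : 1 < b -> logb b (b ^ m) = INR m.
Proof.
  intro Hb. assert (0 < ln b) by (rewrite <- ln_1; apply ln_increasing; lra).
  unfold logb. rewrite ln_pow by lra. field. lra.
Qed.

Lemma pow_gamma_le_walk al be a1 a2 k : (1 <= al)%nat -> (1 <= a1)%nat -> (1 <= a2)%nat ->
  gamma al be ^ k <= INR (walk al be a1 a2 (S (S k))).
Proof.
  intros Hal Ha1 Ha2. eapply Rle_trans; [apply pow_gamma_le_lucasU, Hal|].
  apply le_INR. rewrite walk_SS. nia.
Qed.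

Lemma is_s_le_logb al be n s :
  (1 <= al)%nat -> (1 <= be)%nat -> is_s al be n s -> (2 <= s)%nat ->
  INR s <= logb (gamma al be) (INR n) + 2.
Proof.
  intros Hal Hbe [_ [(a1 & a2 & Ha1 & Ha2 & Hw) _]] Hs.
  destruct s as [|[|k]]; [lia | lia |].
  pose proof (one_lt_gamma al be Hal Hbe).
  pose proof (pow_gamma_le_walk al be a1 a2 k Hal Ha1 Ha2) as Hk. rewrite Hw in Hk.
  apply logb_le with (b := gamma al be) in Hk; [|lra | apply pow_lt; lra].
  rewrite logb_pow in Hk by lra. rewrite !S_INR. lra.
Qed.

Lemma logb_le_is_s al be n s : (1 <= al)%nat -> (1 <= be)%nat -> Nat.gcd al be = 1%nat ->
  (1 <= n)%nat -> is_s al be n s -> (2 <= s)%nat ->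
  logb (gamma al be) (INR n) <= 2 * INR s - 1.
Proof.
  intros Hal Hbe Hg Hn Hs H2.
  destruct s as [|[|k]]; [lia | lia |].
  pose proof (one_lt_gamma al be Hal Hbe).
  assert (Hk : INR n <= gamma al be ^ (2 * k + 3)).
  { eapply Rle_trans; [apply le_INR, (is_s_le_lucas_product al be n k); assumption|].
    apply be_lucasU_mul_le. }
  apply logb_le with (b := gamma al be) in Hk; [|lra | apply lt_0_INR; lia].
  rewrite logb_pow, plus_INR, mult_INR in Hk by lra.
  rewrite !S_INR. simpl INR in Hk. lra.
Qed.

Lemma gamma_1_1 : gamma 1 1 = phi.
Proof. unfold gamma, phi. simpl INR. do 3 f_equal. ring. Qed.

Lemma phi_le_2 : phi <= 2.
Proof.
  unfold phi. pose proof (sqrt_sqrt 5 ltac:(lra)). pose proof (sqrt_pos 5). nra.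
Qed.

Lemma fib_mul_le k : INR (lucasU 1 1 (S k) * lucasU 1 1 (S (S k))) <= phi ^ (2 * k).
Proof.
  rewrite <- gamma_1_1, <- (Rmult_1_l (_ ^ _)).
  apply lucasU_mul_le. rewrite gamma_1_1. simpl INR. pose proof phi_le_2. lra.
Qed.

Lemma logb_phi_le_is_s n s : (1 <= n)%nat -> is_s 1 1 n s -> (2 <= s)%nat ->
  logb phi (INR n) <= 2 * INR s - 4.
Proof.
  intros Hn Hs H2.
  destruct s as [|[|k]]; [lia | lia |].
  pose proof (one_lt_gamma 1 1 ltac:(lia) ltac:(lia)) as Hphi. rewrite gamma_1_1 in Hphi.
  assert (Hk : INR n <= phi ^ (2 * k)).
  { eapply Rle_trans; [apply le_INR, (is_s_le_lucas_product 1 1 n k); auto|].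
    rewrite Nat.mul_1_l. apply fib_mul_le. }
  apply logb_le with (b := phi) in Hk; [|lra | apply lt_0_INR; lia].
  rewrite logb_pow, mult_INR in Hk by lra.
  rewrite !S_INR. simpl INR in Hk. lra.
Qed.

Theorem proposition3p4 :
  (forall (alpha beta n s : nat),
     (1 <= alpha)%nat -> (1 <= beta)%nat -> Nat.gcd alpha beta = 1%nat ->
     (1 <= n)%nat -> is_s alpha beta n s -> (2 < s)%nat ->
     / 2 * logb (gamma alpha beta) (INR n) - 1 <= INR s /\
     INR s <= logb (gamma alpha beta) (INR n) + 2)
  /\
  (forall (n s : nat),
     (1 <= n)%nat -> is_s 1 1 n s -> (2 < s)%nat ->
     / 2 * logb phi (INR n) + 2 <= INR s).
Proof.
  split.
  - intros al be n s Hal Hbe Hg Hn Hs H2.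
    pose proof (logb_le_is_s al be n s Hal Hbe Hg Hn Hs ltac:(lia)).
    pose proof (is_s_le_logb al be n s Hal Hbe Hs ltac:(lia)).
    lra.
  - intros n s Hn Hs H2.
    pose proof (logb_phi_le_is_s n s Hn Hs ltac:(lia)).
    lra.
Qed.
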